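(* For every ordinal $\beta\leq\omega_1$, in $\mathbb{S}(\beta)$ we have $\sigma(\llbracket\mathcal{L}\rrbracket)\subseteq\Lambda$, where $\Lambda=\{A\subseteq I\times\beta: A_0\in\mathcal{B}(I)\text{ and }A_\alpha\in\{\emptyset,I\}\text{ for all }0<\alpha<\beta\}$.
   Context: An LMP is $(S,\Sigma,\{\tau_a\}_{a\in L})$ with $L$ countable and Markov kernels $\tau_a$. The logic $\mathcal{L}$ has formulas $\phi::=\top\mid\phi\wedge\psi\mid\langle a\rangle_{>q}\phi$ ($a\in L$, $q\in\mathbb{Q}\cap[0,1]$) with $\llbracket\top\rrbracket=S$, $\llbracket\phi\wedge\psi\rrbracket=\llbracket\phi\rrbracket\cap\llbracket\psi\rrbracket$, $\llbracket\langle a\rangle_{>q}\phi\rrbracket=\{s:\tau_a(s,\llbracket\phi\rrbracket)>q\}$; $\sigma(\llbracket\mathcal{L}\rrbracket)$ is the $\sigma$-algebra generated by all $\llbracket\phi\rrbracket$. The processes $\mathbb{S}(\beta)$: $I=(0,1)$, $\mathfrak{m}$ Lebesgue measure, $V\subseteq I$ Lebesgue nonmeasurable, $\mathcal{B}_V=\sigma(\mathcal{B}(I)\cup\{V\})$, and $\mathfrak{m}_0,\mathfrak{m}_1$ measures on $\mathcal{B}_V$ extending $\mathfrak{m}$ with $\mathfrak{m}_0(V)\neq\mathfrak{m}_1(V)$. Let $\{q_n\}_{n\in\omega}$ enumerate $\mathbb{Q}\cap I$. For ordinals $\eta$: $\alpha_n(0)=0$, $\alpha_n(\zeta+1)=\zeta$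 for all $n$, and for limit $\lambda$, $(\alpha_n(\lambda))_{n\in\omega}$ is a fixed strictly increasing sequence of nonzero ordinals below $\lambda$ cofinal in $\lambda$. For an ordinal $\beta\leq\omega_1$, $\mathbb{S}(\beta)=(I\times\beta,\ \mathcal{B}_V\otimes\mathcal{P}(\beta),\ \{\tau_n\}_{n\in\omega})$ with $\tau_n((x,\eta),A)=x\cdot\mathfrak{m}_0(A_0)$ if $\eta=0$; $=\mathfrak{m}_0(A_{\alpha_n(\eta)})$ if $\eta>0$ and $x<q_n$; $=\mathfrak{m}_1(A_{\alpha_n(\eta)})$ if $\eta>0$ and $x\geq q_n$; here $A_\gamma=\{r:(r,\gamma)\in A\}$. These $\tau_n$ are Markov kernels, so $\mathbb{S}(\beta)$ is an LMP. *)

From HB Require Import structures.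
From mathcomp Require Import all_boot all_order all_algebra.
From mathcomp Require Import all_classical all_reals all_analysis.

Unset Strict Implicit.
Unset Printing Implicit Defensive.
Import Order.TTheory GRing.Theory Num.Theory.
Import numFieldNormedType.Exports.

Local Open Scope classical_set_scope.
Local Open Scope ring_scope.

(* An ordinal beta is represented by the type B of its elements        *)
(* (the ordinals < beta) with its strict order lt.  beta <= omega_1    *)
(* iff every proper initial segment {xi | xi < eta} is countable.      *)

Definition is_ordinal_le_omega1 (B : Type) (lt : B -> B -> Prop) : Prop :=
  [/\ (forall x, ~ lt x x),
      (forall x y z, lt x y -> lt y z -> lt x z),
      (forall x y, [\/ lt x y, x = y | lt y x]),
      well_founded lt &
      (forall eta, countable [set xi | lt xi eta])].

Definition is_zero (B : Type) (lt : B -> B -> Prop) (eta : B) : Prop :=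
  forall xi, ~ lt xi eta.

Definition is_succ_of (B : Type) (lt : B -> B -> Prop) (eta zeta : B) : Prop :=
  lt zeta eta /\ forall xi, lt zeta xi -> lt xi eta -> False.

Definition is_limit (B : Type) (lt : B -> B -> Prop) (eta : B) : Prop :=
  ~ is_zero B lt eta /\ forall zeta, ~ is_succ_of B lt eta zeta.

Definition alpha_spec (B : Type) (lt : B -> B -> Prop) (alpha : nat -> B -> B)
  : Prop :=
  [/\ (forall n eta, is_zero B lt eta -> alpha n eta = eta),
      (forall n eta zeta, is_succ_of B lt eta zeta -> alpha n eta = zeta) &
      (forall lam, is_limit B lt lam ->
         [/\ (forall n, lt (alpha n lam) (alpha n.+1 lam)),
             (forall n, lt (alpha n lam) lam),
             (forall n, ~ is_zero B lt (alpha n lam)) &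
             (forall xi, lt xi lam -> exists n, lt xi (alpha n lam))])].

Definition Iunit (R : realType) : set R := `]0, 1[%classic.

(* Lebesgue measurability: Caratheodory measurability w.r.t. the outer
   Lebesgue measure (this is the completed Lebesgue sigma-algebra). *)
Definition lebesgue_measurable (R : realType) (A : set R) : Prop :=
  (@wlength R idfun)^*%mu.-cara.-measurable A.

Definition borel_I (R : realType) : set (set R) :=
  [set A : set R | measurable A /\ A `<=` Iunit R].

Definition B_V (R : realType) (V : set R) : set (set R) :=
  <<s Iunit R, borel_I R `|` [set V] >>.

Definition is_measure_on (R : realType) (S : set (set R))
  (mu : set R -> \bar R) : Prop :=
  [/\ mu set0 = 0%E,
      (forall A, S A -> (0 <= mu A)%E) &
      (forall F : (set R)^nat, (forall n, S (F n)) -> trivIset setT F ->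
         ((fun n => \sum_(0 <= k < n) mu (F k))%E @ \oo --> mu (\bigcup_n F n)))].

Definition extends_lebesgue (R : realType) (mu : set R -> \bar R) : Prop :=
  forall A, borel_I R A -> mu A = lebesgue_measure A.

Definition rat01 := {q : rat | (0 <= q <= 1)%R}.

Inductive formula (L : Type) : Type :=
| FTop : formula L
| FAnd : formula L -> formula L -> formula L
| FDiam : L -> rat01 -> formula L -> formula L.

Fixpoint sem (R : realType) (T L : Type) (D : set T)
  (tau : L -> T -> set T -> \bar R) (phi : formula L) : set T :=
  match phi with
  | FTop => D
  | FAnd phi psi => sem R T L D tau phi `&` sem R T L D tau psi
  | FDiam a q phi =>
      [set s | D s /\ ((ratr (sval q))%:E < tau a s (sem R T L D tau phi))%E]
  end.

Definition sigma_sem (R : realType) (T L : Type) (D : set T)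
  (tau : L -> T -> set T -> \bar R) : set (set T) :=
  <<s D, [set sem R T L D tau phi | phi in [set: formula L]] >>.

Definition section (R : realType) (B : Type) (A : set (R * B)) (g : B)
  : set R := [set r | A (r, g)].

Definition Sstates (R : realType) (B : Type) : set (R * B) :=
  [set s | Iunit R s.1].

Definition Stau (R : realType) (B : Type) (lt : B -> B -> Prop)
  (alpha : nat -> B -> B) (q : nat -> rat) (m0 m1 : set R -> \bar R)
  (n : nat) (s : R * B) (A : set (R * B)) : \bar R :=
  let x := s.1 in let eta := s.2 in
  if `[< is_zero B lt eta >] then (x%:E * m0 (section R B A eta))%E
  else if x < ratr (q n) then m0 (section R B A (alpha n eta))
  else m1 (section R B A (alpha n eta)).

Definition Lambda (R : realType) (B : Type) (lt : B -> B -> Prop)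
  : set (set (R * B)) :=
  [set A | [/\ A `<=` Sstates R B,
             (forall g, is_zero B lt g -> borel_I R (section R B A g)) &
             (forall g, ~ is_zero B lt g ->
                section R B A g = set0 \/ section R B A g = Iunit R)]].

Arguments FTop {L}.

From mathcomp Require Import all_boot all_order all_algebra.
From mathcomp Require Import all_classical all_reals all_analysis.
From mathcomp Require Import measurable_realfun.
Import Order.TTheory GRing.Theory Num.Theory.
Local Open Scope classical_set_scope.
Local Open Scope ring_scope.

(* Since sigma([[L]]) is the smallest sigma-algebra
   containing every [[phi]], it suffices to show
   (1) Lambda is a sigma-algebra on the state space I x beta, a purely
       set-theoretic fact about sections, valid for any index type; and
   (2) every [[phi]] lies in Lambda, by induction on phi.
   In (2) only the modal case <n>_{>q} phi is interesting: at level 0 the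
   section {x in I | q < x * m0(A_0)} is Borel because x |-> x * c is
   measurable, and at a level eta > 0 the value tau_n((x,eta), A) is
   m0(A_gamma) or m1(A_gamma) for gamma = alpha_n(eta); as A_gamma is
   Borel these coincide (both measures extend Lebesgue measure), so the
   value does not depend on x and the section is empty or all of I. *)

Lemma Iunit_measurable (R : realType) : measurable (Iunit R).
Proof. exact: measurable_itv. Qed.

Lemma borel_I_set0 (R : realType) : borel_I R set0.
Proof. by split. Qed.

Lemma borel_I_Iunit (R : realType) : borel_I R (Iunit R).
Proof. by split; first exact: Iunit_measurable. Qed.

Lemma borel_I_threshold (R : realType) (c t : \bar R) :
  borel_I R [set x | Iunit R x /\ (t < x%:E * c)%E].
Proof.
have mf : measurable_fun (Iunit R) (fun x : R => (c * x%:E)%E).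
  by apply: measurable_funeM; apply/measurable_EFinP; exact: measurable_id.
have := mf (Iunit_measurable R) _ (emeasurable_itv `]t, +oo[).
set S := (X in measurable X) => mS.
have -> : [set x | Iunit R x /\ (t < x%:E * c)%E] = S.
  apply/seteqP; split=> x /= [Ix].
  - by move=> xc; split=> //=; rewrite in_itv /= andbT muleC.
  - by rewrite /= in_itv /= andbT muleC.
by split=> // x [].
Qed.

Section LambdaSigmaAlgebra.
Variables (R : realType) (B : Type) (lt : B -> B -> Prop).

Local Notation Lambda := (Lambda R B lt).
Local Notation section := (section R B).
Local Notation D := (Sstates R B).

Lemma Lambda_section_borel A g : Lambda A -> borel_I R (section A g).
Proof.
case=> _ hz hnz; have [/hz //|/hnz [->|->]] := pselect (is_zero B lt g).
- exact: borel_I_set0.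
- exact: borel_I_Iunit.
Qed.

Lemma trivial_sectionD A g :
  section A g = set0 \/ section A g = Iunit R ->
  section (D `\` A) g = set0 \/ section (D `\` A) g = Iunit R.
Proof.
move=> [eA|eA]; [right|left]; apply/seteqP; split=> x //=.
- by case.
- by move=> Ix; split=> // Ax; have : section A g x by []; rewrite eA.
- by case=> Ix; apply; have : section A g x by rewrite eA.
Qed.

Lemma Lambda_set0 : Lambda set0.
Proof. by split=> // g _; [exact: borel_I_set0 | left]. Qed.

Lemma Lambda_D : Lambda D.
Proof. by split=> // g _; [exact: borel_I_Iunit | right]. Qed.

Lemma Lambda_setI A1 A2 : Lambda A1 -> Lambda A2 -> Lambda (A1 `&` A2).
Proof.
move=> [D1 z1 n1] [D2 z2 n2]; split.
- by move=> x [/D1].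
- move=> g gz; have [m1 s1] := z1 g gz; have [m2 s2] := z2 g gz.
  by split; [exact: measurableI | move=> x [/s1]].
- move=> g gz.
  have -> : section (A1 `&` A2) g = section A1 g `&` section A2 g by [].
  by case: (n1 g gz) => ->; case: (n2 g gz) => ->;
    rewrite ?set0I ?setI0 ?setIid; auto.
Qed.

Lemma Lambda_setD A : Lambda A -> Lambda (D `\` A).
Proof.
move=> [AD hz hnz]; split.
- by move=> x [].
- move=> g /hz [mA _]; split; last by move=> x [].
  have -> : section (D `\` A) g = Iunit R `\` section A g.
    by apply/seteqP; split=> x /=.
  exact: measurableD (Iunit_measurable R) mA.
- by move=> g /hnz; exact: trivial_sectionD.
Qed.

Lemma Lambda_bigcup (F : (set (R * B))^nat) :
  (forall n, Lambda (F n)) -> Lambda (\bigcup_n F n).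
Proof.
move=> hF; have FD n : F n `<=` D by case: (hF n).
have secU g : section (\bigcup_n F n) g = \bigcup_n section (F n) g.
  by apply/seteqP; split=> x /=.
split.
- by move=> x [n _ /FD].
- move=> g gz; rewrite secU; split.
  + by apply: bigcupT_measurable => n; case: (hF n) => _ /(_ g gz) [].
  + by move=> x [n _ Fx]; case: (hF n) => _ /(_ g gz) [_ /(_ x Fx)].
- move=> g gz; rewrite secU.
  have [[n Fn]|nF] := pselect (exists n, section (F n) g = Iunit R).
  + right; apply/seteqP; split; first by move=> x [k _ /FD].
    by move=> x Ix; exists n => //; rewrite /= Fn.
  + left; apply/seteqP; split=> // x [k _ Fk].
    case: (hF k) => _ _ /(_ g gz) [Fe|Fe]; last by exfalso; apply: nF; exists k.
    by have : section (F k) g x by []; rewrite Fe.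
Qed.

Lemma Lambda_sigma_algebra : sigma_algebra D Lambda.
Proof.
split; [exact: Lambda_set0 | exact: Lambda_setD | exact: Lambda_bigcup].
Qed.

End LambdaSigmaAlgebra.

Section SemanticsInLambda.
Variables (R : realType) (B : Type) (lt : B -> B -> Prop).
Variables (alpha : nat -> B -> B) (q : nat -> rat) (m0 m1 : set R -> \bar R).

Hypothesis m0_m1_borel : forall A, borel_I R A -> m0 A = m1 A.

Local Notation tau := (Stau R B lt alpha q m0 m1).

Lemma Lambda_diamond n (r : rat) A : Lambda R B lt A ->
  Lambda R B lt [set s | Sstates R B s /\ ((ratr r)%:E < tau n s A)%E].
Proof.
move=> LA; split; first by move=> x [].
- move=> g gz; have hz : `[< is_zero B lt g >] by apply/asboolP.
  have -> : section R B [set s | Sstates R B s /\ ((ratr r)%:E < tau n s A)%E] g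
      = [set x | Iunit R x /\ ((ratr r)%:E < x%:E * m0 (section R B A g))%E].
    by apply/seteqP; split=> x; rewrite /section /Stau /= hz => -[].
  exact: borel_I_threshold.
- move=> g gz; have hz : `[< is_zero B lt g >] = false by apply/asboolP.
  set Ag := section R B A (alpha n g).
  have tau_const x : tau n (x, g) A = m0 Ag.
    rewrite /Stau /= hz; case: ifP => // _.
    by rewrite m0_m1_borel //; exact: Lambda_section_borel LA.
  have [above|below] := pselect ((ratr r)%:E < m0 Ag)%E; [right|left];
    apply/seteqP; split=> x; rewrite /section /= ?tau_const.
  + by case.
  + by [].
  + by case.
  + by move=> [].
Qed.

Lemma sem_Lambda (phi : formula nat) :
  Lambda R B lt (sem R (R * B) nat (Sstates R B) tau phi).
Proof.
elim: phi => [|phi1 IH1 phi2 IH2|n r phi IH] /=.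
- exact: Lambda_D.
- exact: Lambda_setI.
- exact: Lambda_diamond.
Qed.

End SemanticsInLambda.

Theorem lemma5p4 (R : realType) (V : set R) (m0 m1 : set R -> \bar R)
  (q : nat -> rat) (B : Type) (lt : B -> B -> Prop) (alpha : nat -> B -> B) :
  V `<=` Iunit R -> ~ lebesgue_measurable R V ->
  is_measure_on R (B_V R V) m0 -> is_measure_on R (B_V R V) m1 ->
  extends_lebesgue R m0 -> extends_lebesgue R m1 -> m0 V <> m1 V ->
  injective q -> range q = [set r : rat | 0 < r < 1] ->
  is_ordinal_le_omega1 B lt -> alpha_spec B lt alpha ->
  sigma_sem R (R * B) nat (Sstates R B) (Stau R B lt alpha q m0 m1) `<=` Lambda R B lt.
Proof.
move=> _ _ _ _ ext0 ext1 _ _ _ _ _.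
have m0_m1_borel A : borel_I R A -> m0 A = m1 A.
  by move=> bA; rewrite ext0 // ext1.
apply: smallest_sub; first exact: Lambda_sigma_algebra.
by move=> _ [phi _ <-]; exact: sem_Lambda.
Qed.
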